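(* Let $n,d,D$ be positive integers with $D\ge d$, let $\varepsilon>0$, and let $\psi,\phi:\mathbb{R}^d\to\mathbb{R}^D$ be fixed maps. Let $K$ be an $n\times d$ matrix with rows $K_1,\dots,K_n$. Then there is a subset $U\subseteq[n]$, determined by $K$ (and $\phi,\varepsilon$) alone, with $|U|\le D/\varepsilon$, such that for every $n\times d$ matrix $Q$ with rows $Q_1,\dots,Q_n$ and every $i\in[n]$ with $\sum_{\ell=1}^n\langle\psi(Q_i),\phi(K_\ell)\rangle^2>0$, we have $\{j\in[n]: A_{ij}\ge\varepsilon\}\subseteq U$, where $A_{ij}=\frac{\langle\psi(Q_i),\phi(K_j)\rangle^2}{\sum_{\ell=1}^n\langle\psi(Q_i),\phi(K_\ell)\rangle^2}$.
   Context: $[n]=\{1,\dots,n\}$; $\langle\cdot,\cdot\rangle$ is the standard inner product on $\mathbb{R}^D$. *)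

From mathcomp Require Import all_boot all_order all_algebra.
From mathcomp Require Import reals.
Set Implicit Arguments. Unset Strict Implicit. Unset Printing Implicit Defensive.
Import Order.TTheory GRing.Theory Num.Theory.
Local Open Scope ring_scope.

Definition inner (R : realType) (D : nat) (x y : 'rV[R]_D) : R :=
  \sum_(k < D) x 0 k * y 0 k.

Definition attn (R : realType) (n d D : nat)
  (psi phi : 'rV[R]_d -> 'rV[R]_D) (Q K : 'M[R]_(n, d)) (i j : 'I_n) : R :=
  (inner (psi (row i Q)) (phi (row j K))) ^+ 2 /
  \sum_(l < n) (inner (psi (row i Q)) (phi (row l K))) ^+ 2.

(* Let F be the D x n matrix whose k-th row collects the k-th coordinates of
   the vectors phi(K_1), ..., phi(K_n).  For every query, the vector
   w = (<psi(Q_i), phi(K_l)>)_l lies in the row space of F, and A_ij is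
   w_j^2 / |w|^2.  Leverage scores t_j of the row space bound this ratio for
   all w simultaneously, and they sum to at most the number D of rows; so
   U = {j | t_j >= eps} works, by Markov's counting argument.  The leverage
   bound is proved by induction on the number of rows: projecting the other
   rows onto the orthogonal complement of the first row c splits every w into
   orthogonal parts, and the first row contributes c_j^2 / |c|^2 to t_j. *)
From mathcomp Require Import all_boot all_order all_algebra.
From mathcomp Require Import reals.
From mathcomp Require Import lra.
Set Implicit Arguments.
Unset Strict Implicit.
Unset Printing Implicit Defensive.

Import Order.TTheory GRing.Theory Num.Theory.
Local Open Scope ring_scope.

Lemma sqrD_le_mulD (R : realDomainType) (p q T S X N : R) :
  p ^+ 2 <= T * S -> q ^+ 2 <= X * N ->
  0 <= T -> 0 <= S -> 0 <= X -> 0 <= N ->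
  (p + q) ^+ 2 <= (T + X) * (S + N).
Proof.
move=> hp hq hT hS hX hN.
have cross_sqr : (2 * (p * q)) ^+ 2 <= (T * N + X * S) ^+ 2.
  by have := sqr_ge0 (T * N - X * S); nra.
have cross : 2 * (p * q) <= T * N + X * S.
  have cross_bound_ge0 : 0 <= T * N + X * S.
    by apply: addr_ge0; apply: mulr_ge0.
  by rewrite leNgt; apply/negP => hlt; nra.
nra.
Qed.

Lemma card_ge_le_sum_div (R : realFieldType) (I : finType) (t : I -> R) (eps : R) :
  0 < eps -> (forall j, 0 <= t j) ->
  #|[set j | eps <= t j]|%:R <= (\sum_j t j) / eps.
Proof.
move=> eps_gt0 t_ge0; set A := [set j | eps <= t j].
rewrite ler_pdivlMr //.
have -> : #|A|%:R * eps = \sum_(j in A) eps by rewrite sumr_const mulr_natl.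
rewrite [leRHS](bigID (mem A)) /= -[leLHS]addr0 lerD //; last exact: sumr_ge0.
by apply: ler_sum => j; rewrite inE.
Qed.

Section Leverage.
Variables (R : realFieldType) (n : nat).
Implicit Types (u v c : 'rV[R]_n).

Definition dot u v : R := (u *m v^T) 0 0.

Lemma dotE u v : dot u v = \sum_k u 0 k * v 0 k.
Proof. by rewrite /dot mxE; apply: eq_bigr => k _; rewrite mxE. Qed.

Lemma dotC u v : dot u v = dot v u.
Proof. by rewrite !dotE; apply: eq_bigr => k _; rewrite mulrC. Qed.

Lemma dotDl u v w : dot (u + v) w = dot u w + dot v w.
Proof. by rewrite /dot mulmxDl mxE. Qed.

Lemma dotZl a u v : dot (a *: u) v = a * dot u v.
Proof. by rewrite /dot -scalemxAl mxE. Qed.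

Lemma dotDr u v w : dot u (v + w) = dot u v + dot u w.
Proof. by rewrite dotC dotDl !(dotC u). Qed.

Lemma dotZr a u v : dot u (a *: v) = a * dot u v.
Proof. by rewrite dotC dotZl dotC. Qed.

Lemma dot0r u : dot u 0 = 0.
Proof. by rewrite /dot trmx0 mulmx0 mxE. Qed.

Lemma sqr_coord_le_dot u j : u 0 j ^+ 2 <= dot u u.
Proof.
rewrite dotE (bigD1 j) //= expr2 lerDl.
by apply: sumr_ge0 => k _; rewrite -expr2 sqr_ge0.
Qed.

Lemma dot_ge0 u : 0 <= dot u u.
Proof. by rewrite dotE; apply: sumr_ge0 => k _; rewrite -expr2 sqr_ge0. Qed.

Lemma dot_eq0 u : dot u u = 0 -> u = 0.
Proof.
move=> uu0; apply/rowP => k; rewrite mxE; apply/eqP.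
by rewrite -sqrf_eq0 eq_le sqr_ge0 -uu0 sqr_coord_le_dot.
Qed.

Lemma dot_add_orth u c b :
  dot u c = 0 -> dot (u + b *: c) (u + b *: c) = dot u u + b ^+ 2 * dot c c.
Proof.
move=> uc0; rewrite !dotDl !dotDr !dotZl !dotZr uc0 (dotC c u) uc0.
by rewrite !mulr0 !addr0 add0r mulrA -expr2.
Qed.

(* For c = 0 the junk inverse 0^-1 = 0 makes this the identity. *)
Definition orthproj c : 'M[R]_n := 1%:M - (dot c c)^-1 *: (c^T *m c).

Lemma mul_orthproj u c : u *m orthproj c = u - (dot u c / dot c c) *: c.
Proof.
rewrite mulmxBr mulmx1 -scalemxAr mulmxA [u *m c^T]mx11_scalar mul_scalar_mx.
by rewrite scalerA mulrC.
Qed.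

Lemma dot_orthproj u c : dot (u *m orthproj c) c = 0.
Proof.
rewrite mul_orthproj dotDl -scaleNr dotZl.
have [cc0|cc_neq0] := eqVneq (dot c c) 0; last by rewrite mulNr divfK ?subrr.
by rewrite (dot_eq0 cc0) dot0r mul0r oppr0 mul0r addr0.
Qed.

Lemma leverage_bound m (M : 'M[R]_(m, n)) :
  exists t : 'I_n -> R, [/\ forall j, 0 <= t j, \sum_j t j <= m%:R &
    forall (x : 'rV_m) j, (x *m M) 0 j ^+ 2 <= t j * dot (x *m M) (x *m M)].
Proof.
elim: m M => [|m IH] M.
  exists (fun=> 0); split => [//||x j]; first by rewrite big1.
  by rewrite (thinmx0 x) mul0mx mxE expr0n mul0r.
change 'M[R]_(1 + m, n) in M; pose c := usubmx M; pose N := dot c c.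
have [t [t_ge0 sum_t t_bound]] := IH (dsubmx M *m orthproj c).
have ratio_ge0 j : 0 <= c 0 j ^+ 2 / N by rewrite divr_ge0 ?sqr_ge0 ?dot_ge0.
exists (fun j => t j + c 0 j ^+ 2 / N); split => [j||x j].
- by rewrite addr_ge0.
- rewrite big_split /= -mulr_suml -natr1 lerD //.
  have -> : \sum_j c 0 j ^+ 2 = N.
    by rewrite /N dotE; apply: eq_bigr => k _; rewrite expr2.
  by have [->|N_neq0] := eqVneq N 0; rewrite ?invr0 ?mulr0 ?divff.
change 'rV[R]_(1 + m) in x; set y := rsubmx x.
have split_xM : x *m M = lsubmx x 0 0 *: c + y *m dsubmx M.
  rewrite -{1}[x]hsubmxK -{1}[M]vsubmxK mul_row_col.
  by rewrite {1}[lsubmx x]mx11_scalar mul_scalar_mx.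
set w' := y *m (dsubmx M *m orthproj c).
set b := lsubmx x 0 0 + dot (y *m dsubmx M) c / N.
have -> : x *m M = w' + b *: c.
  by rewrite split_xM /w' mulmxA mul_orthproj scalerDl addrCA subrK.
have w'_orth : dot w' c = 0 by rewrite /w' mulmxA dot_orthproj.
rewrite dot_add_orth // [(w' + _) 0 j]mxE [(b *: c) 0 j]mxE.
apply: (sqrD_le_mulD (t_bound y j) _ (t_ge0 j) (dot_ge0 w') (ratio_ge0 j)
  (mulr_ge0 (sqr_ge0 b) (dot_ge0 c))).
have [N0|N_neq0] := eqVneq N 0; last by rewrite exprMn [leRHS]mulrCA divfK.
have := sqr_coord_le_dot c j; rewrite -/N N0 => cj_le0.
by rewrite !mulr0 exprMn mulr_ge0_le0 ?sqr_ge0.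
Qed.

End Leverage.

Theorem theorem2 (R : realType) (n d D : nat) (hn : (0 < n)%N) (hd : (0 < d)%N)
  (hDd : (d <= D)%N) (eps : R) (heps : 0 < eps)
  (phi : 'rV[R]_d -> 'rV[R]_D) (K : 'M[R]_(n, d)) :
  exists U : {set 'I_n},
    (#|U|%:R <= D%:R / eps) /\
    forall (psi : 'rV[R]_d -> 'rV[R]_D) (Q : 'M[R]_(n, d)) (i : 'I_n),
      0 < \sum_(l < n) (inner (psi (row i Q)) (phi (row l K))) ^+ 2 ->
      forall j : 'I_n, eps <= attn psi phi Q K i j -> j \in U.
Proof.
pose F : 'M[R]_(D, n) := \matrix_(k, l) phi (row l K) 0 k.
have [t [t_ge0 sum_t t_bound]] := leverage_bound F.
exists [set j | eps <= t j]; split.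
  apply: le_trans (card_ge_le_sum_div heps t_ge0) _.
  by rewrite ler_pM2r ?invr_gt0.
move=> psi Q i sum_gt0 j attn_ge; rewrite inE.
set w := psi (row i Q) *m F.
have inner_w l : inner (psi (row i Q)) (phi (row l K)) = w 0 l.
  by rewrite mxE; apply: eq_bigr => k _; rewrite mxE.
have sum_w : \sum_l inner (psi (row i Q)) (phi (row l K)) ^+ 2 = dot w w.
  by rewrite dotE; apply: eq_bigr => l _; rewrite inner_w expr2.
rewrite /attn inner_w sum_w in attn_ge sum_gt0.
by apply: le_trans attn_ge _; rewrite ler_pdivrMr //; apply: t_bound.
Qed.
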